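(* Let $\lambda>0$, $X\in\mathbb R^{\mathbf m\times\mathbf n}$, and define on $\mathbb R^{\mathbf m\times\mathbf r}\times\mathbb R^{\mathbf r\times\mathbf n}$ $$f(U,V)=\tfrac12\|X-UV\|_F^2+\tfrac{\lambda}{2}\|I_{\mathbf r}-VV^\top\|_F^2,$$ $$\varphi_1(U,V)=\tfrac12\|U\|_F^2,\qquad \varphi_2(U,V)=\tfrac{6\lambda}{4}\|V\|_F^4+\tfrac12\varepsilon(U)\|V\|_F^2,\quad \varepsilon(U)=\max\{\|U^\top U\|,2\lambda\},$$ where $\|\cdot\|$ denotes the spectral norm. Then: (1) for every fixed $V$, the function $f(\cdot,V)$ is $(L_1(V),l_1)$-relatively smooth with respect to $\varphi_1(\cdot,V)$ with $L_1(V)=\|VV^\top\|$ and $l_1=0$, i.e. for all $U,U'$: $0\le f(U,V)-f(U',V)-\langle\nabla_Uf(U',V),U-U'\rangle\le \|VV^\top\|\,D_{\varphi_1(\cdot,V)}(U,U')$; (2) for every fixed $U$, the function $f(U,\cdot)$ is $(L_2,l_2)$-relatively smooth with respect to $\varphi_2(U,\cdot)$ with $L_2=1$ and $l_2=1$, i.e. for all $V,V'$: $-D_{\varphi_2(U,\cdot)}(V,V')\le f(U,V)-f(U,V')-\langle\nabla_Vf(U,V'),V-V'\rangle\le D_{\varphi_2(U,\cdot)}(V,V')$.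
   Context: Inner products on matrix spaces are the Frobenius (trace) inner product. For a differentiable convex $\psi$, the Bregman divergence is $D_\psi(x,y)=\psi(x)-\psi(y)-\langle\nabla\psi(y),x-y\rangle$. A function $\phi$ is $(L,l)$-relatively smooth with respect to $\psi$ if for all $x,y$: $-lD_\psi(x,y)\le\phi(x)-\phi(y)-\langle\nabla\phi(y),x-y\rangle\le LD_\psi(x,y)$. *)

From HB Require Import structures.
From mathcomp Require Import all_boot all_order all_algebra.
From mathcomp Require Import all_classical all_reals all_analysis.
Set Implicit Arguments. Unset Strict Implicit. Unset Printing Implicit Defensive.
Import Order.TTheory GRing.Theory Num.Theory.
Import numFieldNormedType.Exports.
Local Open Scope classical_set_scope.
Local Open Scope ring_scope.

Section Defs.
Variable R : realType.

Definition frob_inner (p q : nat) (A B : 'M[R]_(p, q)) : R :=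
  \sum_(i < p) \sum_(j < q) A i j * B i j.

Definition frob2 (p q : nat) (A : 'M[R]_(p, q)) : R := frob_inner A A.

Definition vnorm2 (q : nat) (x : 'cV[R]_q) : R := Num.sqrt (frob2 x).

Definition specnorm (p q : nat) (A : 'M[R]_(p, q)) : R :=
  sup [set vnorm2 (A *m x) | x in [set x : 'cV[R]_q | vnorm2 x <= 1]].

(* Bregman divergence D_psi(x,y) = psi x - psi y - <grad psi(y), x - y>,
   where <grad psi(y), h> is the (Frechet) differential of psi at y applied to h *)
Definition bregman (p q : nat) (psi : 'M[R]_(p, q) -> R) (x y : 'M[R]_(p, q)) : R :=
  psi x - psi y - 'd psi y (x - y).

Definition rel_smooth (p q : nat) (phi psi : 'M[R]_(p, q) -> R) (L l : R) : Prop :=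
  forall x y : 'M[R]_(p, q),
    - l * bregman psi x y <= phi x - phi y - 'd phi y (x - y) <= L * bregman psi x y.

Definition fobj (m n r : nat) (lam : R) (X : 'M[R]_(m, n))
  (U : 'M[R]_(m, r)) (V : 'M[R]_(r, n)) : R :=
  2^-1 * frob2 (X - U *m V) + lam / 2 * frob2 (1%:M - V *m V^T).

Definition phi1 (m n r : nat) (U : 'M[R]_(m, r)) (V : 'M[R]_(r, n)) : R :=
  2^-1 * frob2 U.

Definition eps_of (m r : nat) (lam : R) (U : 'M[R]_(m, r)) : R :=
  Num.max (specnorm (U^T *m U)) (2 * lam).

Definition phi2 (m n r : nat) (lam : R) (U : 'M[R]_(m, r)) (V : 'M[R]_(r, n)) : R :=
  6 * lam / 4 * (frob2 V) ^+ 2 + 2^-1 * eps_of lam U * frob2 V.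

End Defs.

From mathcomp Require Import all_boot all_order all_algebra.
From mathcomp Require Import all_classical all_reals all_analysis.
From mathcomp Require Import ring lra.
Import Order.TTheory GRing.Theory Num.Theory.
Import numFieldNormedType.Exports.
Local Open Scope ring_scope.
Set Implicit Arguments. Unset Strict Implicit.

(** Every function involved is a polynomial of degree at most four in the
    matrix entries, so along a segment [y + t (x - y)] it is a quartic in [t]
    and its Bregman divergence is the sum of the coefficients of [t^2], [t^3]
    and [t^4]. This gives [D_f(.,V)(U, U') = |(U - U') V|^2 / 2], which lies
    between [0] and [|V V^T| |U - U'|^2 / 2]. In the second block, with
    [H = V - V'], [a = |V'|^2], [b = <V', H>], [g = |H|^2],
    [D_f(U,.)(V, V') = |U H|^2 / 2
                      + lam/2 (|V V^T - V' V'^T|^2 + 2 |V'^T H|^2 - 2 g)] and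
    [D_phi2(U,.)(V, V') = 3 lam/2 ((2b + g)^2 + 2 a g) + eps(U) g / 2].
    Writing [V V^T - V' V'^T = H M^T + M H^T] with the midpoint [M] bounds its
    squared norm by [4 g |M|^2 = 4 g (a + b + g/4)]; together with
    [|U H|^2 <= |U^T U| g <= eps(U) g] and [|V'^T H|^2 <= a g] the upper
    inequality reduces to [lam (2 b^2 + (2b + g)^2) >= 0], and the lower one to
    [eps(U) >= 2 lam]. *)

Section CauchySchwarz.
Variable R : realFieldType.

Lemma sqr_le_mul_of_quadratic_ge0 (a b c : R) : 0 <= c ->
  (forall t, 0 <= a - 2 * b * t + c * t ^+ 2) -> b ^+ 2 <= a * c.
Proof.
move=> c_ge0 q_ge0; have [c_gt0|c_le0] := ltrP 0 c.
  have := q_ge0 (b / c).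
  have -> : a - 2 * b * (b / c) + c * (b / c) ^+ 2 = (a * c - b ^+ 2) / c.
    by field; rewrite gt_eqF.
  by rewrite pmulr_lge0 ?invr_gt0 // subr_ge0.
have c0 : c = 0 by apply/eqP; rewrite eq_le c_le0 c_ge0.
rewrite c0 mulr0; have [->|b_neq0] := eqVneq b 0; first by rewrite expr0n.
have := q_ge0 ((a + 1) / (2 * b)).
have -> : a - 2 * b * ((a + 1) / (2 * b)) + c * ((a + 1) / (2 * b)) ^+ 2 = -1.
  by rewrite c0; field.
by rewrite oppr_ge0 ler10.
Qed.

Lemma sum_mul_sqr_le (I : finType) (u v : I -> R) :
  (\sum_i u i * v i) ^+ 2 <= (\sum_i u i ^+ 2) * (\sum_i v i ^+ 2).
Proof.
apply: sqr_le_mul_of_quadratic_ge0; first by apply: sumr_ge0 => i _; exact: sqr_ge0.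
move=> t; have -> : \sum_i u i ^+ 2 - 2 * (\sum_i u i * v i) * t
    + (\sum_i v i ^+ 2) * t ^+ 2 = \sum_i (u i - t * v i) ^+ 2.
  rewrite mulr_sumr !mulr_suml -sumrB -big_split; apply: eq_bigr => i _ /=; ring.
by apply: sumr_ge0 => i _; exact: sqr_ge0.
Qed.

End CauchySchwarz.

Section Frobenius.
Variable R : realType.
Implicit Types (p q k : nat) (t : R).

Lemma frob_innerC p q (A B : 'M[R]_(p, q)) : frob_inner A B = frob_inner B A.
Proof. by apply: eq_bigr => i _; apply: eq_bigr => j _; rewrite mulrC. Qed.

Lemma frob_innerDl p q (A B C : 'M[R]_(p, q)) :
  frob_inner (A + B) C = frob_inner A C + frob_inner B C.
Proof.
rewrite /frob_inner -big_split; apply: eq_bigr => i _.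
by rewrite -big_split; apply: eq_bigr => j _; rewrite mxE mulrDl.
Qed.

Lemma frob_innerZl p q t (A B : 'M[R]_(p, q)) :
  frob_inner (t *: A) B = t * frob_inner A B.
Proof.
rewrite /frob_inner mulr_sumr; apply: eq_bigr => i _.
by rewrite mulr_sumr; apply: eq_bigr => j _; rewrite mxE mulrA.
Qed.

Lemma frob_innerNl p q (A B : 'M[R]_(p, q)) : frob_inner (- A) B = - frob_inner A B.
Proof. by rewrite -scaleN1r frob_innerZl mulN1r. Qed.

Lemma frob_innerBl p q (A B C : 'M[R]_(p, q)) :
  frob_inner (A - B) C = frob_inner A C - frob_inner B C.
Proof. by rewrite frob_innerDl frob_innerNl. Qed.

Lemma frob_innerDr p q (A B C : 'M[R]_(p, q)) :
  frob_inner A (B + C) = frob_inner A B + frob_inner A C.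
Proof. by rewrite frob_innerC frob_innerDl !(frob_innerC A). Qed.

Lemma frob_innerZr p q t (A B : 'M[R]_(p, q)) :
  frob_inner A (t *: B) = t * frob_inner A B.
Proof. by rewrite frob_innerC frob_innerZl frob_innerC. Qed.

Lemma frob_innerNr p q (A B : 'M[R]_(p, q)) : frob_inner A (- B) = - frob_inner A B.
Proof. by rewrite frob_innerC frob_innerNl frob_innerC. Qed.

Lemma frob_inner_trmx p q (A B : 'M[R]_(p, q)) : frob_inner A^T B^T = frob_inner A B.
Proof.
rewrite /frob_inner exchange_big; apply: eq_bigr => i _.
by apply: eq_bigr => j _; rewrite !mxE.
Qed.

Lemma frob_inner_mulmxl p k q (A : 'M[R]_(p, k)) (C : 'M[R]_(k, q)) (B : 'M[R]_(p, q)) :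
  frob_inner (A *m C) B = frob_inner C (A^T *m B).
Proof.
rewrite /frob_inner.
transitivity (\sum_(i < p) \sum_(j < q) \sum_(l < k) A i l * C l j * B i j).
  apply: eq_bigr => i _; apply: eq_bigr => j _; rewrite mxE mulr_suml.
  by apply: eq_bigr => l _.
transitivity (\sum_(l < k) \sum_(j < q) \sum_(i < p) A i l * C l j * B i j).
  under eq_bigr => i _ do rewrite exchange_big.
  by rewrite exchange_big; apply: eq_bigr => l _; exact: exchange_big.
apply: eq_bigr => l _; apply: eq_bigr => j _; rewrite mxE mulr_sumr.
by apply: eq_bigr => i _; rewrite !mxE; ring.
Qed.

Lemma frob2_ge0 p q (A : 'M[R]_(p, q)) : 0 <= frob2 A.
Proof.
by apply: sumr_ge0 => i _; apply: sumr_ge0 => j _; rewrite -expr2 sqr_ge0.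
Qed.

Lemma frob2_trmx p q (A : 'M[R]_(p, q)) : frob2 A^T = frob2 A.
Proof. exact: frob_inner_trmx. Qed.

Lemma frob2Z p q t (A : 'M[R]_(p, q)) : frob2 (t *: A) = t ^+ 2 * frob2 A.
Proof. by rewrite /frob2 frob_innerZl frob_innerZr mulrA expr2. Qed.

Lemma frob2N p q (A : 'M[R]_(p, q)) : frob2 (- A) = frob2 A.
Proof. by rewrite /frob2 frob_innerNl frob_innerNr opprK. Qed.

Lemma frob2_lineE p q t (A B : 'M[R]_(p, q)) :
  frob2 (A + t *: B) = frob2 A + 2 * t * frob_inner A B + t ^+ 2 * frob2 B.
Proof.
rewrite /frob2 !(frob_innerDl, frob_innerDr, frob_innerZl, frob_innerZr).
rewrite [frob_inner B A]frob_innerC; ring.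
Qed.

Lemma frob2_quadE p q t (A B C : 'M[R]_(p, q)) :
  frob2 (A + t *: B + t ^+ 2 *: C) = frob2 A + 2 * t * frob_inner A B
    + t ^+ 2 * (frob2 B + 2 * frob_inner A C) + 2 * t ^+ 3 * frob_inner B C
    + t ^+ 4 * frob2 C.
Proof.
rewrite /frob2 !(frob_innerDl, frob_innerDr, frob_innerZl, frob_innerZr).
rewrite [frob_inner B A]frob_innerC [frob_inner C A]frob_innerC.
rewrite [frob_inner C B]frob_innerC; ring.
Qed.

Lemma frob2D_le p q (A B : 'M[R]_(p, q)) :
  frob2 (A + B) <= 2 * frob2 A + 2 * frob2 B.
Proof.
have := frob2_ge0 (A - B); rewrite -scaleN1r frob2_lineE.
by rewrite -[B]scale1r frob2_lineE !scale1r expr1n sqrrN expr1n; lra.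
Qed.

Lemma frob_inner_sqr_le p q (A B : 'M[R]_(p, q)) :
  frob_inner A B ^+ 2 <= frob2 A * frob2 B.
Proof.
rewrite /frob2 /frob_inner !pair_bigA /=.
have := sum_mul_sqr_le (fun x : 'I_p * 'I_q => A x.1 x.2) (fun x => B x.1 x.2).
by rewrite /= !(eq_bigr _ (fun x _ => expr2 _)).
Qed.

Lemma frob_inner_le p q (A B : 'M[R]_(p, q)) :
  frob_inner A B <= Num.sqrt (frob2 A) * Num.sqrt (frob2 B).
Proof.
rewrite -sqrtrM ?frob2_ge0 //; apply: le_trans (ler_norm _) _.
by rewrite -sqrtr_sqr ler_wsqrtr // frob_inner_sqr_le.
Qed.

Lemma frob2_mulmx_le p k q (A : 'M[R]_(p, k)) (B : 'M[R]_(k, q)) :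
  frob2 (A *m B) <= frob2 A * frob2 B.
Proof.
rewrite /frob2 /frob_inner.
apply: (@le_trans _ _ (\sum_(i < p) \sum_(j < q)
   (\sum_(l < k) A i l ^+ 2) * (\sum_(l < k) B l j ^+ 2))).
  apply: ler_sum => i _; apply: ler_sum => j _; rewrite -expr2 mxE.
  exact: (sum_mul_sqr_le (fun l => A i l) (fun l => B l j)).
rewrite mulr_suml; apply: ler_sum => i _.
rewrite [X in _ <= _ * X]exchange_big mulr_sumr; apply: ler_sum => j _.
by rewrite !(eq_bigr _ (fun x _ => expr2 _)).
Qed.

Lemma frob2_sym_mulmx_le p q (H M : 'M[R]_(p, q)) :
  frob2 (H *m M^T + M *m H^T) <= 4 * frob2 H * frob2 M.
Proof.
apply: le_trans (frob2D_le _ _) _.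
have := frob2_mulmx_le H M^T; have := frob2_mulmx_le M H^T.
rewrite !frob2_trmx; lra.
Qed.

Lemma frob_inner1_mulmx_tr p q (A : 'M[R]_(p, q)) :
  frob_inner 1%:M (A *m A^T) = frob2 A.
Proof. by rewrite frob_innerC frob_inner_mulmxl mulmx1 /frob2 frob_inner_trmx. Qed.

Lemma frob_inner_mulmx_tr p q (W H : 'M[R]_(p, q)) :
  frob_inner (W *m W^T) (H *m H^T) = frob2 (W^T *m H).
Proof.
rewrite frob_inner_mulmxl -frob_inner_trmx trmxK !trmx_mul trmxK -mulmxA.
rewrite frob_innerC frob_inner_mulmxl trmxK -[H^T *m W]trmxK trmx_mul trmxK.
by rewrite /frob2 frob_inner_trmx.
Qed.

End Frobenius.

Section MatrixIdentities.
Variable R : realType.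

Lemma mulmx_trmx_line p q (y h : 'M[R]_(p, q)) (t : R) :
  (y + t *: h) *m (y + t *: h)^T =
  y *m y^T + t *: (h *m y^T + y *m h^T) + t ^+ 2 *: (h *m h^T).
Proof.
rewrite raddfD /= linearZ /= mulmxDl !mulmxDr -!scalemxAl -!scalemxAr scalerA.
by apply/matrixP => i j; rewrite !mxE; ring.
Qed.

Lemma mulmx_trmx_subE p q (x y : 'M[R]_(p, q)) :
  let M := y + 2^-1 *: (x - y) in
  x *m x^T - y *m y^T = (x - y) *m M^T + M *m (x - y)^T.
Proof.
move=> /=; set h := x - y.
have -> : x = y + 1 *: h by rewrite scale1r addrC subrK.
clearbody h; rewrite mulmx_trmx_line expr1n !scale1r.
rewrite [(y + _)^T]raddfD /= [(_ *: _)^T]linearZ /= mulmxDl mulmxDr.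
rewrite -scalemxAl -scalemxAr.
by apply/matrixP => i j; rewrite !mxE; field.
Qed.

End MatrixIdentities.

Section SpectralNorm.
Variable R : realType.
Implicit Types (p q k : nat) (t : R).

Lemma vnorm2Z q t (x : 'cV[R]_q) : vnorm2 (t *: x) = `|t| * vnorm2 x.
Proof. by rewrite /vnorm2 frob2Z sqrtrM ?sqr_ge0 // sqrtr_sqr. Qed.

Lemma vnorm2_mulmx_le_frob p q (A : 'M[R]_(p, q)) (x : 'cV[R]_q) :
  vnorm2 (A *m x) <= Num.sqrt (frob2 A) * vnorm2 x.
Proof. by rewrite -sqrtrM ?frob2_ge0 // ler_wsqrtr // frob2_mulmx_le. Qed.

Lemma specnorm_ub p q (A : 'M[R]_(p, q)) (x : 'cV[R]_q) :
  vnorm2 x <= 1 -> vnorm2 (A *m x) <= specnorm A.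
Proof.
move=> x_le1; apply: ub_le_sup; last by exists x.
exists (Num.sqrt (frob2 A)) => _ [y y_le1 <-].
apply: le_trans (vnorm2_mulmx_le_frob A y) _.
by rewrite ler_piMr ?sqrtr_ge0.
Qed.

Lemma vnorm2_mulmx_le p q (A : 'M[R]_(p, q)) (x : 'cV[R]_q) :
  vnorm2 (A *m x) <= specnorm A * vnorm2 x.
Proof.
have [x0|x_neq0] := eqVneq (vnorm2 x) 0.
  by have := vnorm2_mulmx_le_frob A x; rewrite x0 !mulr0.
have x_gt0 : 0 < vnorm2 x by rewrite lt_def x_neq0 sqrtr_ge0.
have xV_ge0 : 0 <= (vnorm2 x)^-1 by rewrite invr_ge0 ltW.
rewrite -ler_pdivrMr //.
have -> : vnorm2 (A *m x) / vnorm2 x = vnorm2 (A *m ((vnorm2 x)^-1 *: x)).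
  by rewrite -scalemxAr vnorm2Z ger0_norm // mulrC.
by apply: specnorm_ub; rewrite vnorm2Z ger0_norm // mulVf.
Qed.

Lemma col_mulmx p k q (A : 'M[R]_(p, k)) (B : 'M[R]_(k, q)) j :
  col j (A *m B) = A *m col j B.
Proof.
by apply/matrixP => i l; rewrite !mxE; apply: eq_bigr => u _; rewrite !mxE.
Qed.

Lemma frob2_sum_col p q (M : 'M[R]_(p, q)) : frob2 M = \sum_(j < q) frob2 (col j M).
Proof.
rewrite /frob2 /frob_inner exchange_big; apply: eq_bigr => j _.
by apply: eq_bigr => i _; rewrite big_ord1 !mxE.
Qed.

Lemma frob2_mulmx_le_specl p k q (A : 'M[R]_(p, k)) (B : 'M[R]_(k, q)) :
  frob2 (A *m B) <= specnorm (A^T *m A) * frob2 B.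
Proof.
rewrite frob2_sum_col [frob2 B]frob2_sum_col mulr_sumr; apply: ler_sum => j _.
rewrite col_mulmx /frob2 frob_inner_mulmxl mulmxA.
apply: le_trans (frob_inner_le _ _) _.
apply: le_trans (ler_wpM2l (sqrtr_ge0 _) (vnorm2_mulmx_le _ _)) _.
by rewrite mulrCA -expr2 sqr_sqrtr // frob2_ge0.
Qed.

Lemma frob2_mulmx_le_specr p k q (A : 'M[R]_(p, k)) (B : 'M[R]_(k, q)) :
  frob2 (A *m B) <= specnorm (B *m B^T) * frob2 A.
Proof.
by rewrite -frob2_trmx trmx_mul -[X in specnorm (X *m _)]trmxK -(frob2_trmx A);
  apply: frob2_mulmx_le_specl.
Qed.

End SpectralNorm.

Section EntrywiseDifferentiability.
Variables (R : realType) (p q : nat) (y : 'M[R]_(p, q)).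

Definition mx_differentiable a b (F : 'M[R]_(p, q) -> 'M[R]_(a, b)) :=
  forall i j, differentiable (fun x => F x i j) y.

Lemma mx_differentiable_id : mx_differentiable id.
Proof. by move=> i j; exact: differentiable_coord. Qed.

Lemma mx_differentiable_cst a b (M : 'M[R]_(a, b)) : mx_differentiable (fun _ => M).
Proof. by move=> i j; exact: differentiable_cst. Qed.

Lemma mx_differentiableB a b (F G : 'M[R]_(p, q) -> 'M[R]_(a, b)) :
  mx_differentiable F -> mx_differentiable G -> mx_differentiable (fun x => F x - G x).
Proof.
move=> dF dG i j; rewrite (_ : (fun x => _) = (fun x => F x i j - G x i j)).
  exact: differentiableB.
by apply/funext => x; rewrite !mxE.
Qed.

Lemma mx_differentiable_trmx a b (F : 'M[R]_(p, q) -> 'M[R]_(a, b)) :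
  mx_differentiable F -> mx_differentiable (fun x => (F x)^T).
Proof.
move=> dF i j; rewrite (_ : (fun x => _) = (fun x => F x j i)); first exact: dF.
by apply/funext => x; rewrite mxE.
Qed.

Lemma mx_differentiable_mulmx a b c (F : 'M[R]_(p, q) -> 'M[R]_(a, b))
    (G : 'M[R]_(p, q) -> 'M[R]_(b, c)) :
  mx_differentiable F -> mx_differentiable G -> mx_differentiable (fun x => F x *m G x).
Proof.
move=> dF dG i j.
rewrite (_ : (fun x => _) = (fun x => \sum_(l < b) F x i l * G x l j)).
  by rewrite -fct_sumE; apply: differentiable_sum => l; exact: differentiableM.
by apply/funext => x; rewrite mxE.
Qed.

Lemma differentiable_frob2 a b (F : 'M[R]_(p, q) -> 'M[R]_(a, b)) :
  mx_differentiable F -> differentiable (fun x => frob2 (F x)) y.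
Proof.
move=> dF; rewrite /frob2 /frob_inner -fct_sumE; apply: differentiable_sum => i.
by rewrite -fct_sumE; apply: differentiable_sum => j; exact: differentiableM.
Qed.

End EntrywiseDifferentiability.

Section BregmanOfQuartic.
Variables (R : realType) (p q : nat).

Lemma derive_along_poly (f : 'M[R]_(p, q) -> R) (y h : 'M[R]_(p, q)) (P : {poly R}) :
  (forall t, f (y + t *: h) = P.[t]) -> 'D_h f y = P`_1.
Proof.
move=> fP; have fP0 : f y = P.[0] by rewrite -fP scale0r addr0.
have -> : 'D_h f y = 'D_1 (horner P) 0.
  rewrite /derive; set d := (fun _ : R => _); set d' := (fun _ : R => _).
  suff -> : d = d' by []; apply/funext => t; rewrite /d /d' /=.
  by rewrite [t *: h + y]addrC fP fP0 addr0 -[t%:A]/(t * 1) mulr1.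
by rewrite derive_val horner_coef0 coef_deriv.
Qed.

Lemma bregman_quartic (f : 'M[R]_(p, q) -> R) (x y : 'M[R]_(p, q))
    (a0 a1 a2 a3 a4 : R) :
  differentiable f y ->
  (forall t, f (y + t *: (x - y)) =
     a0 + a1 * t + a2 * t ^+ 2 + a3 * t ^+ 3 + a4 * t ^+ 4) ->
  bregman f x y = a2 + a3 + a4.
Proof.
move=> df fP; pose P := Poly [:: a0; a1; a2; a3; a4].
have {}fP t : f (y + t *: (x - y)) = P.[t] by rewrite fP horner_Poly /=; ring.
have fx : f x = P.[1] by rewrite -fP scale1r addrC subrK.
have fy : f y = P.[0] by rewrite -fP scale0r addr0.
rewrite /bregman -deriveE // (_ : 'D_(x - y) f y = P`_1); last exact: derive_along_poly.
by rewrite fx fy coef_Poly !horner_Poly /=; ring.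
Qed.

End BregmanOfQuartic.

Section BregmanDivergences.
Variables (R : realType) (m n r : nat) (lam : R).
Implicit Types (X : 'M[R]_(m, n)) (U : 'M[R]_(m, r)) (V : 'M[R]_(r, n)).

Lemma bregman_fobj_U X V (x y : 'M[R]_(m, r)) :
  bregman (fun U => fobj lam X U V) x y = 2^-1 * frob2 ((x - y) *m V).
Proof.
set H := x - y.
rewrite (@bregman_quartic _ _ _ _ x y (fobj lam X y V)
  (frob_inner (X - y *m V) (- (H *m V))) (2^-1 * frob2 (H *m V)) 0 0).
- by rewrite !addr0.
- apply: differentiableD; last exact: differentiable_cst.
  apply: differentiableM; first exact: differentiable_cst.
  apply: differentiable_frob2; apply: mx_differentiableB.
    exact: mx_differentiable_cst.
  exact: mx_differentiable_mulmx (mx_differentiable_id _)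
    (mx_differentiable_cst _ V).
- move=> t; rewrite /fobj -/H.
  have -> : X - (y + t *: H) *m V = (X - y *m V) + t *: - (H *m V).
    by rewrite mulmxDl -scalemxAl opprD addrA scalerN.
  by rewrite frob2_lineE frob2N; field.
Qed.

Lemma bregman_phi1 V (x y : 'M[R]_(m, r)) :
  bregman (fun U => phi1 U V) x y = 2^-1 * frob2 (x - y).
Proof.
rewrite (@bregman_quartic _ _ _ _ x y (phi1 y V) (frob_inner y (x - y))
  (2^-1 * frob2 (x - y)) 0 0).
- by rewrite !addr0.
- apply: differentiableM; first exact: differentiable_cst.
  exact/differentiable_frob2/mx_differentiable_id.
- by move=> t; rewrite /phi1 frob2_lineE; field.
Qed.

Lemma bregman_fobj_V X U (x y : 'M[R]_(r, n)) :
  bregman (fun V => fobj lam X U V) x y = 2^-1 * frob2 (U *m (x - y)) +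
    lam / 2 * (frob2 (x *m x^T - y *m y^T)
               + 2 * (frob2 (y^T *m (x - y)) - frob2 (x - y))).
Proof.
set H := x - y; set P := 1%:M - y *m y^T.
set S := H *m y^T + y *m H^T; set Q := H *m H^T.
rewrite (@bregman_quartic _ _ _ _ x y (fobj lam X U y)
  (frob_inner (X - U *m y) (- (U *m H)) + lam * frob_inner P (- S))
  (2^-1 * frob2 (U *m H) + lam / 2 * (frob2 S + 2 * frob_inner P (- Q)))
  (lam * frob_inner S Q) (lam / 2 * frob2 Q)).
- have -> : x *m x^T - y *m y^T = S + 1 *: Q.
    have -> : x = y + 1 *: H by rewrite scale1r addrC subrK.
    rewrite mulmx_trmx_line expr1n !scale1r /S /Q.
    by apply/matrixP => i j; rewrite !mxE; ring.
  rewrite frob2_lineE frob_innerNr frob_innerBl frob_inner1_mulmx_tr.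
  by rewrite frob_inner_mulmx_tr; field.
- apply: differentiableD; apply: differentiableM; try exact: differentiable_cst;
    apply: differentiable_frob2; apply: mx_differentiableB;
    try exact: mx_differentiable_cst.
  + exact: mx_differentiable_mulmx (mx_differentiable_cst _ U)
      (mx_differentiable_id _).
  + apply: mx_differentiable_mulmx; first exact: mx_differentiable_id.
    exact/mx_differentiable_trmx/mx_differentiable_id.
- move=> t; rewrite /fobj -/H.
  have -> : X - U *m (y + t *: H) = (X - U *m y) + t *: - (U *m H).
    by rewrite mulmxDr -scalemxAr opprD addrA scalerN.
  have -> : 1%:M - (y + t *: H) *m (y + t *: H)^T = P + t *: - S + t ^+ 2 *: - Q.
    rewrite mulmx_trmx_line /P /S /Q.
    by apply/matrixP => i j; rewrite !mxE; ring.
  rewrite frob2_lineE frob2_quadE !frob2N -/P [frob_inner (- S) _]frob_innerNl.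
  by rewrite [frob_inner S _]frob_innerNr opprK; field.
Qed.

Lemma bregman_phi2 U (x y : 'M[R]_(r, n)) :
  bregman (fun V => phi2 lam U V) x y =
    3 * lam / 2 * ((2 * frob_inner y (x - y) + frob2 (x - y)) ^+ 2
                   + 2 * frob2 y * frob2 (x - y))
    + 2^-1 * eps_of lam U * frob2 (x - y).
Proof.
set H := x - y; set a := frob2 y; set b := frob_inner y H; set g := frob2 H.
set e := eps_of lam U.
rewrite (@bregman_quartic _ _ _ _ x y (phi2 lam U y)
  (6 * lam / 4 * (4 * a * b) + 2^-1 * e * (2 * b))
  (6 * lam / 4 * (4 * b ^+ 2 + 2 * a * g) + 2^-1 * e * g)
  (6 * lam / 4 * (4 * b * g)) (6 * lam / 4 * g ^+ 2)).
- by field.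
- have dfrob2 := differentiable_frob2 (mx_differentiable_id y).
  apply: differentiableD; apply: differentiableM; try exact: differentiable_cst.
    rewrite (_ : (fun V => _) = (fun V => frob2 V * frob2 V)).
      exact: differentiableM.
    by apply/funext => V; rewrite expr2.
  exact: dfrob2.
- by move=> t; rewrite /phi2 -/H frob2_lineE -/a -/b -/g -/e; field.
Qed.

End BregmanDivergences.

Section RelativeSmoothness.
Variables (R : realType) (m n r : nat) (lam : R) (X : 'M[R]_(m, n)).

Lemma fobj_rel_smooth_U (V : 'M[R]_(r, n)) :
  rel_smooth (fun U => fobj lam X U V) (fun U => phi1 U V) (specnorm (V *m V^T)) 0.
Proof.
move=> x y; rewrite -/(bregman (fun U => fobj lam X U V) x y).
rewrite bregman_fobj_U bregman_phi1 oppr0 mul0r; apply/andP; split.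
  by rewrite mulr_ge0 ?invr_ge0 ?ler0n ?frob2_ge0.
by rewrite mulrCA ler_wpM2l ?invr_ge0 ?ler0n // frob2_mulmx_le_specr.
Qed.

Lemma fobj_rel_smooth_V (U : 'M[R]_(m, r)) : 0 <= lam ->
  rel_smooth (fun V => fobj lam X U V) (fun V => phi2 lam U V) 1 1.
Proof.
move=> lam_ge0 x y; rewrite -/(bregman (fun V => fobj lam X U V) x y).
rewrite bregman_fobj_V bregman_phi2.
set H := x - y; set e := eps_of lam U.
set a := frob2 y; set b := frob_inner y H; set g := frob2 H.
set u := frob2 (U *m H); set s := frob2 (x *m x^T - y *m y^T).
set w := frob2 (y^T *m H).
have g_ge0 : 0 <= g := frob2_ge0 H.
have a_ge0 : 0 <= a := frob2_ge0 y.
have e_ge : 2 * lam <= e by rewrite /e /eps_of le_max lexx orbT.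
have u_ge0 : 0 <= u := frob2_ge0 _.
have u_le : u <= e * g.
  apply: le_trans (frob2_mulmx_le_specl U H) _.
  by apply: ler_wpM2r => //; rewrite /e /eps_of le_max lexx.
have lam_s_ge0 : 0 <= lam * s by rewrite mulr_ge0 ?frob2_ge0.
have lam_s_le : lam * s <= lam * (4 * g * (a + b + g / 4)).
  apply: ler_wpM2l => //; rewrite /s mulmx_trmx_subE -/H.
  rewrite (_ : a + b + g / 4 = frob2 (y + 2^-1 *: H)).
    exact: frob2_sym_mulmx_le.
  by rewrite frob2_lineE -/a -/b -/g; field.
have lam_w_ge0 : 0 <= lam * w by rewrite mulr_ge0 ?frob2_ge0.
have lam_w_le : lam * w <= lam * (a * g).
  by apply: ler_wpM2l => //; have := frob2_mulmx_le y^T H; rewrite frob2_trmx.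
have lam_g_ge0 : 0 <= lam * g by rewrite mulr_ge0.
have lam_g_le : lam * g <= 2^-1 * e * g by apply: ler_wpM2r => //; lra.
have lam_sqr1_ge0 : 0 <= lam * ((2 * b + g) ^+ 2 + 2 * a * g).
  by rewrite mulr_ge0 // addr_ge0 ?sqr_ge0 // !mulr_ge0.
have lam_sqr2_ge0 : 0 <= lam * ((2 * b + g) ^+ 2 + 2 * b ^+ 2).
  by rewrite mulr_ge0 // addr_ge0 ?sqr_ge0 // mulr_ge0 ?sqr_ge0.
apply/andP; split; lra.
Qed.

End RelativeSmoothness.

Theorem proposition5p1 (R : realType) (m n r : nat) (lam : R) (X : 'M[R]_(m, n)) :
  0 < lam ->
  (forall V : 'M[R]_(r, n),
     rel_smooth (fun U => fobj lam X U V) (fun U => phi1 U V)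
       (specnorm (V *m V^T)) 0) /\
  (forall U : 'M[R]_(m, r),
     rel_smooth (fun V => fobj lam X U V) (fun V => phi2 lam U V) 1 1).
Proof.
move=> lam_gt0; split=> [V | U]; first exact: fobj_rel_smooth_U.
exact/fobj_rel_smooth_V/ltW.
Qed.
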